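(* Let $\mu$ be a probability measure on $\mathbb{R}^d$, $\nu=\sum_{i=1}^M w_i\delta_{y_i}$ with $w_i>0$, $\sum_iw_i=1$, $w_{\min}=\min_iw_i$, and $c:\mathbb{R}^d\times\mathbb{R}^d\to[0,\infty)$ a cost. Assume the semi-dual objective $H$ admits a minimizer, and let $K$ be a compact set with $\mu(K)\ge1-\frac12 w_{\min}$, with associated projection set $\mathcal C$, and let $\mathbf g^*\in\mathcal C$ be a minimizer of $H$. Run PSGD with step sizes $\gamma_k=\gamma_1/k^{b}$, where $b=1/2$ and $\gamma_1=\mathrm{Diam}(\mathcal C)/(2\sqrt2)$. Then for every $n\ge1$, $$\mathbb{E}\big[H(\bar{\mathbf g}_n)-H(\mathbf g^* )\big]\le \frac{4\sqrt2\,\mathrm{Diam}(\mathcal C)}{\sqrt n}.$$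
   Context: For $\mathbf g\in\mathbb{R}^M$: $\mathbf g^c(x)=\min_i\{c(x,y_i)-g_i\}$; Laguerre cells $\mathbb L_j(\mathbf g)=\{x:\mathbf g^c(x)=c(x,y_j)-g_j\}$; $h(\mathbf g,x)=-\mathbf g^c(x)-\sum_jw_jg_j$; $H(\mathbf g)=\mathbb{E}_{X\sim\mu}[h(\mathbf g,X)]$. Projection set: $\|c\|_{K,\infty}=\sup_{x\in K,j}|c(x,y_j)|$, $\mathcal C=\{\mathbf g\in\mathbb{R}^M:|g_j|\le\|c\|_{K,\infty}\ \forall j\}$, $\mathrm{Proj}_{\mathcal C}$ the Euclidean projection onto $\mathcal C$, and $\mathrm{Diam}(\mathcal C)$ its Euclidean diameter. PSGD: given $\gamma_1>0$, $b$, i.i.d. samples $X_1,X_2,\dots\sim\mu$, start from $\mathbf g_0\in\mathcal C$ and for $k\ge1$ set $\mathbf g_k=\mathrm{Proj}_{\mathcal C}\big(\mathbf g_{k-1}-\gamma_k\,\partial_{\mathbf g}h(\mathbf g_{k-1},X_k)\big)$, $\gamma_k=\gamma_1k^{-b}$, where $\partial_{\mathbf g}h(\mathbf g,x)_j=\mathbf 1_{x\in\mathbb L_j(\mathbf g)}-w_j$ (a point lying in several cells is assigned to one of them by a fixed rule); the averaged iterate is $\bar{\mathbf g}_n=\frac1{n+1}\sum_{k=0}^n\mathbf g_k$. *)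

From HB Require Import structures.
From mathcomp Require Import all_boot all_order all_algebra.
From mathcomp Require Import all_classical all_reals all_analysis.
Set Implicit Arguments. Unset Strict Implicit. Unset Printing Implicit Defensive.
Import Order.TTheory GRing.Theory Num.Theory.
Import numFieldNormedType.Exports.
Local Open Scope classical_set_scope.
Local Open Scope ring_scope.

(* Points of R^d are represented as d.-tuple R, equipped with the product
   (= Borel) sigma-algebra from MathComp-Analysis.  For topological notions
   (compactness) we transport to row vectors 'rV[R]_d. *)
Definition tup2rv (R : realType) (d : nat) (t : d.-tuple R) : 'rV[R]_d :=
  \row_i tnth t i.

Section OT.
Variables (R : realType) (d M : nat).
Notation T := (d.-tuple R).
Variables (c : T -> T -> R) (y : 'I_M -> T) (w : 'I_M -> R).

(* Laguerre cell index of x for the potential g, ties broken by the fixed rule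
   "smallest index" (pick returns the first index in the enumeration). *)
Definition lag (g : 'I_M -> R) (x : T) : option 'I_M :=
  [pick j | [forall k, c x (y j) - g j <= c x (y k) - g k]].

Definition ctrans (g : 'I_M -> R) (x : T) : R :=
  if lag g x is Some j then c x (y j) - g j else 0.

Definition hfun (g : 'I_M -> R) (x : T) : R :=
  - ctrans g x - \sum_j w j * g j.

Definition subgrad (g : 'I_M -> R) (x : T) : 'I_M -> R :=
  fun j => (if lag g x == Some j then 1 else 0) - w j.

Definition Hsd (mu : probability T R) (g : 'I_M -> R) : \bar R :=
  (\int[mu]_x (hfun g x)%:E)%E.

Definition cnormK (K : set T) : R :=
  sup [set r | exists x j, K x /\ r = `|c x (y j)|].

Definition Cset (K : set T) : set ('I_M -> R) :=
  [set g | forall j, `|g j| <= cnormK K].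
End OT.

Definition enorm (R : realType) (M : nat) (v : 'I_M -> R) : R :=
  Num.sqrt (\sum_j v j ^+ 2).

Definition Diam (R : realType) (M : nat) (C : set ('I_M -> R)) : R :=
  sup [set r | exists u v, C u /\ C v /\ r = enorm (fun j => u j - v j)].

Definition is_eucl_proj (R : realType) (M : nat) (C : set ('I_M -> R))
    (proj : ('I_M -> R) -> ('I_M -> R)) : Prop :=
  forall z, C (proj z) /\
    forall u, C u -> enorm (fun j => z j - proj z j) <= enorm (fun j => z j - u j).

Definition wmin (R : realType) (M : nat) (w : 'I_M -> R) : R := inf (range w).

Definition iid_law (R : realType) (dO dT : measure_display)
    (O : measurableType dO) (T : measurableType dT)
    (P : probability O R) (Y : nat -> O -> T) (mu : probability T R) : Prop :=
  [/\ (forall k, measurable_fun setT (Y k)),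
      (forall k (A : set T), measurable A -> P (Y k @^-1` A) = mu A) &
      (forall (s : seq nat) (B : nat -> set T), uniq s ->
         (forall i, measurable (B i)) ->
         P (\bigcap_(i in [set i | i \in s]) (Y i @^-1` B i)) =
         (\prod_(i <- s) P (Y i @^-1` B i))%E)].

Definition gammak (R : realType) (gamma1 b : R) (k : nat) : R :=
  gamma1 * (k%:R `^ (- b)).

(* PSGD iterates: X k is the k-th sample (k >= 1; X 0 is unused) *)
Fixpoint psgd (R : realType) (d M : nat) (c : d.-tuple R -> d.-tuple R -> R)
    (y : 'I_M -> d.-tuple R) (w : 'I_M -> R)
    (proj : ('I_M -> R) -> ('I_M -> R)) (gamma1 b : R) (g0 : 'I_M -> R)
    (O : Type) (X : nat -> O -> d.-tuple R) (k : nat) (om : O) : 'I_M -> R :=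
  match k with
  | 0 => g0
  | k'.+1 =>
      let gp := psgd c y w proj gamma1 b g0 X k' om in
      proj (fun j => gp j - gammak gamma1 b k'.+1 * subgrad c y w gp (X k'.+1 om) j)
  end.

Definition gbar (R : realType) (d M : nat) (c : d.-tuple R -> d.-tuple R -> R)
    (y : 'I_M -> d.-tuple R) (w : 'I_M -> R)
    (proj : ('I_M -> R) -> ('I_M -> R)) (gamma1 b : R) (g0 : 'I_M -> R)
    (O : Type) (X : nat -> O -> d.-tuple R) (n : nat) (om : O) : 'I_M -> R :=
  fun j => (n.+1%:R)^-1 * \sum_(k < n.+1) psgd c y w proj gamma1 b g0 X k om j.

(* The semi-dual H is convex: h(., X) has the stochastic subgradient
   (1_{X in L_j(g)} - w_j)_j, whose mean at g is q(g) - w with q_j(g) = mu(L_j(g)),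
   of Euclidean norm at most sqrt 2, and the projection onto the box C is
   nonexpansive.  The classical projected-SGD estimate
     E|g_k - g*|^2 <= E|g_{k-1} - g*|^2 - 2 gamma_k E[H g_{k-1} - H g*] + 2 gamma_k^2,
   summed by parts against the weights 1/(2 gamma_k) and combined with convexity at
   the average iterate, gives the rate for gamma_k = gamma_1 / sqrt k.
   The iterates depend on the samples only through the indices of the Laguerre cells
   the samples fall in; by independence these indices form a Markov chain with
   transition law q(g_k), so every expectation is a finite sum over index paths. *)

From HB Require Import structures.
From mathcomp Require Import all_boot all_order all_algebra.
From mathcomp Require Import all_classical all_reals all_analysis.
From mathcomp Require Import measurable_realfun ring lra.
Import Order.TTheory GRing.Theory Num.Theory.
Import numFieldNormedType.Exports.
Local Open Scope classical_set_scope.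
Local Open Scope ring_scope.

Set Implicit Arguments. Unset Strict Implicit. Unset Printing Implicit Defensive.

Lemma sum_eq_natr_mul (V : pzRingType) (I : finType) (j : I) (a : I -> V) :
  \sum_i (j == i)%:R * a i = a j.
Proof.
rewrite (bigD1 j) //= eqxx mul1r big1 ?addr0 // => i /negPf ij.
by rewrite eq_sym ij mul0r.
Qed.

Lemma measurable_fun_finbool (dT : measure_display) (T : measurableType dT)
    (I : finType) (P : I -> T -> bool) (F : {ffun I -> bool} -> bool) :
  (forall i, measurable_fun setT (P i)) ->
  measurable_fun setT (fun x => F [ffun i => P i x]).
Proof.
move=> mP; apply: (measurable_fun_bool true); rewrite setTI.
have -> : (fun x => F [ffun i => P i x]) @^-1` [set true] =
    \bigcup_(b in [set b | F b]) \bigcap_(i in [set: I]) (P i @^-1` [set b i]).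
  apply/seteqP; split => x /=.
    by move=> Fx; exists [ffun i => P i x] => // i _; rewrite ffunE.
  case=> b Fb Pb; rewrite (_ : [ffun i => P i x] = b) //.
  by apply/ffunP => i; rewrite ffunE Pb.
apply: fin_bigcup_measurable; first exact: finite_finset.
move=> b _; apply: fin_bigcap_measurable; first exact: finite_finset.
by move=> i _; rewrite -[_ @^-1` _]setTI; apply: mP.
Qed.

Section LaguerreCells.
Variables (R : realType) (d M : nat).
Local Notation T := (d.-tuple R).
Variables (c : T -> T -> R) (y : 'I_M -> T) (w : 'I_M -> R) (j0 : 'I_M).

Definition cell (g : 'I_M -> R) (j : 'I_M) : set T := [set x | lag c y g x = Some j].

Definition cell_index g x := odflt j0 (lag c y g x).

Lemma lag_cell_index g x : lag c y g x = Some (cell_index g x).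
Proof.
rewrite /cell_index /lag; case: pickP => // nomin.
case: (arg_minP (fun j => c x (y j) - g j) (isT : xpredT j0)) => j _ jmin.
by move: (nomin j) => /negP[]; apply/forallP => k; exact: jmin.
Qed.

Lemma ctrans_cell_index g x :
  ctrans c y g x = c x (y (cell_index g x)) - g (cell_index g x).
Proof. by rewrite /ctrans lag_cell_index. Qed.

Lemma ctrans_le g x k : ctrans c y g x <= c x (y k) - g k.
Proof.
have := lag_cell_index g x; rewrite ctrans_cell_index /lag.
by case: pickP => // j /forallP jmin [<-].
Qed.

Lemma hfun_subgrad g g' x :
  hfun c y w g x + \sum_j ((cell_index g x == j)%:R - w j) * (g' j - g j)
    <= hfun c y w g' x.
Proof.
under eq_bigr do rewrite mulrBl.
rewrite sumrB sum_eq_natr_mul.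
rewrite (eq_bigr (fun j => w j * g' j - w j * g j)) => [|j _]; last by rewrite mulrBr.
rewrite sumrB /hfun ctrans_cell_index.
have := ctrans_le g' x (cell_index g x); lra.
Qed.

Hypothesis hcm : forall j, measurable_fun setT (fun x => c x (y j)).

Lemma measurable_cell g j : measurable (cell g j).
Proof.
(* [lag g x] is a function of the finitely many measurable booleans [below i x]. *)
pose below i x := [forall k, c x (y i) - g i <= c x (y k) - g k].
have mbelow i : measurable_fun setT (below i).
  have -> : below i = fun x =>
      [forall k, [ffun k => c x (y i) - g i <= c x (y k) - g k] k].
    by apply/funext => x; apply: eq_forallb => k; rewrite ffunE.
  apply: (@measurable_fun_finbool _ _ _
    (fun k x => c x (y i) - g i <= c x (y k) - g k) (fun b => [forall k, b k])) => k.
  by apply: measurable_fun_ler; apply: measurable_funB => //; exact: measurable_cst.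
have -> : cell g j =
    (fun x => [pick i | [ffun i => below i x] i] == Some j) @^-1` [set true].
  apply/seteqP; split => x; rewrite /cell /lag /=.
    by move=> <-; apply/eqP; apply: eq_pick => i; rewrite ffunE.
  by move=> /eqP <-; apply: eq_pick => i; rewrite ffunE.
rewrite -[_ @^-1` _]setTI.
exact: (@measurable_fun_finbool _ _ _ below (fun b => [pick i | b i] == Some j)).
Qed.

End LaguerreCells.

Section CellMass.
Variables (R : realType) (d M : nat).
Local Notation T := (d.-tuple R).
Variables (mu : probability T R) (c : T -> T -> R) (y : 'I_M -> T) (j0 : 'I_M).
Hypothesis hcm : forall j, measurable_fun setT (fun x => c x (y j)).

Definition cell_mass g j := fine (mu (cell c y g j)).

Lemma cell_massE g j : mu (cell c y g j) = (cell_mass g j)%:E.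
Proof. by rewrite fineK // fin_num_measure //; exact: measurable_cell. Qed.

Lemma cell_mass_ge0 g j : 0 <= cell_mass g j.
Proof. by rewrite -lee_fin -cell_massE measure_ge0. Qed.

Lemma indic_cell g j x : \1_(cell c y g j) x = (cell_index c y j0 g x == j)%:R :> R.
Proof.
rewrite indicE; case: eqP => [<-|neq].
  by rewrite mem_set // /cell /= (lag_cell_index _ _ j0).
by rewrite memNset // /cell /= (lag_cell_index _ _ j0) => -[/neq].
Qed.

Lemma sum_cell_mass g : \sum_j cell_mass g j = 1.
Proof.
have mcell j : measurable (cell c y g j) by exact: measurable_cell.
apply: EFin_inj; rewrite -sumEFin.
transitivity (\sum_j \int[mu]_x (\1_(cell c y g j) x)%:E)%E.
  by apply: eq_bigr => j _; rewrite integral_indic // setIT; apply/esym/cell_massE.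
rewrite -integral_sum // => [|j]; last exact: integrable_indic.
have sum_indic x : \sum_j \1_(cell c y g j) x = 1 :> R.
  rewrite (eq_bigr (fun j => (cell_index c y j0 g x == j)%:R * 1)) => [|j _].
    exact: sum_eq_natr_mul.
  by rewrite indic_cell mulr1.
under eq_integral do rewrite sumEFin sum_indic.
by rewrite integral_cst // [X in (_ * X)%E](probability_setT mu) mule1.
Qed.

End CellMass.

Section SemiDualIntegrals.
Variables (R : realType) (d M : nat).
Local Notation T := (d.-tuple R).
Variables (mu : probability T R) (c : T -> T -> R) (y : 'I_M -> T) (w : 'I_M -> R).
Variable j0 : 'I_M.
Hypothesis hcm : forall j, measurable_fun setT (fun x => c x (y j)).
Hypothesis hHfin : forall g, mu.-integrable setT (fun x => (hfun c y w g x)%:E).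

Local Notation q := (cell_mass mu c y).

Definition Hsdr g := fine (Hsd c y w mu g).

Lemma HsdE g : Hsd c y w mu g = (Hsdr g)%:E.
Proof. by rewrite fineK //; exact: integrable_fin_num (hHfin g). Qed.

Lemma subgrad_termE g (v : 'I_M -> R) x :
  (\sum_j ((cell_index c y j0 g x == j)%:R - w j) * v j)%:E =
  (\sum_j ((v j)%:E * (\1_(cell c y g j) x)%:E + (- (w j * v j))%:E))%E.
Proof.
rewrite -sumEFin; apply: eq_bigr => j _.
by rewrite (indic_cell c y j0) -EFinM -EFinD; congr EFin; ring.
Qed.

Lemma integrable_subgrad_term g (v : 'I_M -> R) :
  mu.-integrable setT
    (fun x => (\sum_j ((cell_index c y j0 g x == j)%:R - w j) * v j)%:E).
Proof.
apply: (eq_integrable measurableT _ _ (fun x _ => esym (subgrad_termE g v x))).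
apply: integrable_sum => // j _; apply: integrableD => //.
  by apply: integrableZl => //; apply: integrable_indic; exact: measurable_cell.
exact: finite_measure_integrable_cst.
Qed.

Lemma integral_subgrad_term g (v : 'I_M -> R) :
  (\int[mu]_x (\sum_j ((cell_index c y j0 g x == j)%:R - w j) * v j)%:E =
   (\sum_j (q g j - w j) * v j)%:E)%E.
Proof.
under eq_integral do rewrite subgrad_termE.
have mcell j : measurable (cell c y g j) by exact: measurable_cell.
rewrite integral_sum // => [|j]; last first.
  apply: integrableD => //; last exact: finite_measure_integrable_cst.
  by apply: integrableZl => //; exact: integrable_indic.
rewrite -sumEFin; apply: eq_bigr => j _.
rewrite integralD //; last exact: finite_measure_integrable_cst.
  rewrite integralZl //; last exact: integrable_indic.
  rewrite integral_indic // setIT [X in (_ * X)%E](cell_massE mu hcm) integral_cst //.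
  rewrite [X in (_ + _ * X)%E](probability_setT mu).
  by rewrite mule1 -EFinM -EFinD; congr EFin; ring.
by apply: integrableZl => //; exact: integrable_indic.
Qed.

Lemma Hsdr_subgrad g g' :
  Hsdr g + \sum_j (q g j - w j) * (g' j - g j) <= Hsdr g'.
Proof.
rewrite -lee_fin EFinD -integral_subgrad_term -!HsdE /Hsd -integralD //;
  last exact: integrable_subgrad_term.
apply: le_integral => //.
  by apply: integrableD => //; exact: integrable_subgrad_term.
by move=> x _; rewrite -EFinD lee_fin; exact: hfun_subgrad.
Qed.

End SemiDualIntegrals.

Lemma enorm_le_sum_sqr (R : realType) M (a b : 'I_M -> R) :
  enorm a <= enorm b -> \sum_j a j ^+ 2 <= \sum_j b j ^+ 2.
Proof. by rewrite /enorm ler_sqrt // sumr_ge0 // => j _; exact: sqr_ge0. Qed.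

Section Box.
Variables (R : realType) (M : nat) (B : R).

Definition box : set ('I_M -> R) := [set g | forall j, `|g j| <= B].

Lemma interval_proj_nonexpansive (z p u : R) : `|p| <= B -> `|u| <= B ->
  (forall v, `|v| <= B -> (z - p) ^+ 2 <= (z - v) ^+ 2) ->
  (p - u) ^+ 2 <= (z - u) ^+ 2.
Proof.
rewrite !ler_norml => /andP[pB1 pB2] /andP[uB1 uB2] pmin.
have B0 : 0 <= B by lra.
have [zB|Bz] := lerP B z.
  have := pmin B; rewrite ger0_norm // lexx => /(_ isT) ?.
  have -> : p = B by nra.
  nra.
have [zB'|Bz'] := lerP z (- B).
  have := pmin (- B); rewrite normrN ger0_norm // lexx => /(_ isT) ?.
  have -> : p = - B by nra.
  nra.
have := pmin z; rewrite subrr expr0n /= ler_norml => /(_ _) zmin.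
have -> : p = z by have := zmin ltac:(apply/andP; split; lra); nra.
done.
Qed.

Variable proj : ('I_M -> R) -> ('I_M -> R).
Hypothesis hproj : is_eucl_proj box proj.

Lemma box_proj_in z : box (proj z).
Proof. by case: (hproj z). Qed.

Lemma box_proj_coord z j v : `|v| <= B -> (z j - proj z j) ^+ 2 <= (z j - v) ^+ 2.
Proof.
move=> vB; pose u i := if i == j then v else proj z i.
have u_in : box u by move=> i; rewrite /u; case: eqP => // _; exact: box_proj_in.
have := enorm_le_sum_sqr ((hproj z).2 u u_in).
have off_j : \sum_(i | i != j) (z i - u i) ^+ 2 = \sum_(i | i != j) (z i - proj z i) ^+ 2.
  by apply: eq_bigr => i /negPf; rewrite /u => ->.
by rewrite (bigD1 j) //= [X in _ <= X](bigD1 j) //= off_j /u eqxx lerD2r.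
Qed.

Lemma box_proj_nonexpansive z u : box u ->
  \sum_j (proj z j - u j) ^+ 2 <= \sum_j (z j - u j) ^+ 2.
Proof.
move=> u_in; apply: ler_sum => j _.
apply: interval_proj_nonexpansive; [exact: box_proj_in | exact: u_in |].
by move=> v; exact: box_proj_coord.
Qed.

Lemma box_enorm_le_Diam u v : box u -> box v ->
  enorm (fun j => u j - v j) <= Diam box.
Proof.
move=> u_in v_in; apply: ub_le_sup; last by exists u, v.
exists (Num.sqrt (\sum_(j < M) (2 * B) ^+ 2)) => _ [u' [v' [u'_in [v'_in ->]]]].
rewrite /enorm ler_sqrt; last by apply: sumr_ge0 => j _; exact: sqr_ge0.
apply: ler_sum => j _; rewrite -[X in X <= _]real_normK ?num_real //.
have uv_le : `|u' j - v' j| <= 2 * B.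
  by apply: le_trans (ler_normB _ _) _; have := u'_in j; have := v'_in j; lra.
by apply: lerXn2r; rewrite // nnegrE; apply: le_trans uv_le.
Qed.

Lemma box_Diam_ge0 u : box u -> 0 <= Diam box.
Proof. by move=> u_in; apply: le_trans (box_enorm_le_Diam u_in u_in); exact: sqrtr_ge0. Qed.

Lemma box_sqdist_le_Diam u v : box u -> box v ->
  \sum_j (u j - v j) ^+ 2 <= Diam box ^+ 2.
Proof.
move=> u_in v_in; rewrite -(@sqr_sqrtr _ (\sum_j (u j - v j) ^+ 2)); last first.
  by apply: sumr_ge0 => j _; exact: sqr_ge0.
apply: lerXn2r; rewrite ?nnegrE ?sqrtr_ge0 //; last exact: box_enorm_le_Diam.
exact: box_Diam_ge0 u_in.
Qed.

End Box.

Section IndexChain.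
Variables (R : realType) (M : nat) (G : Type).
Variables (g0 : G) (step : nat -> G -> 'I_M -> G) (j0 : 'I_M) (q : G -> 'I_M -> R).

Fixpoint iterate (s : seq 'I_M) (k : nat) : G :=
  if k is k'.+1 then step k (iterate s k') (nth j0 s k') else g0.

Definition endpoint s := iterate s (size s).

(* [chainE pre m F] is the expectation of [F] over [m] further steps of the chain
   of indices started after [pre], whose next index is [j] with probability
   [q (endpoint pre) j]. *)
Fixpoint chainE (pre : seq 'I_M) (m : nat) (F : seq 'I_M -> R) : R :=
  if m is m'.+1 then \sum_j q (endpoint pre) j * chainE (rcons pre j) m' F
  else F pre.

Lemma eq_iterate s t k : (forall i, (i < k)%N -> nth j0 s i = nth j0 t i) ->
  iterate s k = iterate t k.
Proof.
elim: k => [//|k IH] st /=.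
by rewrite st // IH // => i ik; apply: st; exact: ltnW.
Qed.

Lemma iterate_take s k : (k <= size s)%N -> iterate s k = endpoint (take k s).
Proof.
move=> ks; rewrite /endpoint size_take_min (minn_idPl ks).
by apply: eq_iterate => i ik; rewrite nth_take.
Qed.

Lemma endpoint_rcons s j : endpoint (rcons s j) = step (size s).+1 (endpoint s) j.
Proof.
rewrite /endpoint size_rcons /= nth_rcons ltnn eqxx.
by congr step; apply: eq_iterate => i si; rewrite nth_rcons si.
Qed.

Lemma eq_chainE pre m F F' :
  (forall t, size t = m -> F (pre ++ t) = F' (pre ++ t)) ->
  chainE pre m F = chainE pre m F'.
Proof.
elim: m pre => [|m IH] pre FF' /=; first by have := FF' [::] erefl; rewrite cats0.
apply: eq_bigr => j _; congr (_ * _); apply: IH => t tm.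
by rewrite cat_rcons; apply: FF'; rewrite /= tm.
Qed.

Hypothesis q_ge0 : forall g j, 0 <= q g j.
Hypothesis sum_q : forall g, \sum_j q g j = 1.

Lemma chainE_le pre m F F' :
  (forall t, size t = m -> F (pre ++ t) <= F' (pre ++ t)) ->
  chainE pre m F <= chainE pre m F'.
Proof.
elim: m pre => [|m IH] pre FF' /=; first by have := FF' [::] erefl; rewrite cats0.
apply: ler_sum => j _; apply: ler_wpM2l => //; apply: IH => t tm.
by rewrite cat_rcons; apply: FF'; rewrite /= tm.
Qed.

Lemma chainE_cst pre m a : chainE pre m (fun _ => a) = a.
Proof.
elim: m pre => [//|m IH] pre /=.
by under eq_bigr do rewrite IH; rewrite -mulr_suml sum_q mul1r.
Qed.

Lemma chainED pre m F F' :
  chainE pre m (fun s => F s + F' s) = chainE pre m F + chainE pre m F'.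
Proof.
elim: m pre => [//|m IH] pre /=.
by rewrite -big_split; apply: eq_bigr => j _; rewrite IH mulrDr.
Qed.

Lemma chainEZ pre m a F : chainE pre m (fun s => a * F s) = a * chainE pre m F.
Proof.
elim: m pre => [//|m IH] pre /=.
by rewrite mulr_sumr; apply: eq_bigr => j _; rewrite IH mulrCA.
Qed.

Lemma chainE_sum pre m N (F : nat -> seq 'I_M -> R) :
  chainE pre m (fun s => \sum_(k < N) F k s) = \sum_(k < N) chainE pre m (F k).
Proof.
elim: N => [|N IH].
  by rewrite big_ord0 -[RHS](chainE_cst pre m 0); apply: eq_chainE => t _; rewrite big_ord0.
rewrite big_ord_recr /= -IH -chainED; apply: eq_chainE => t _.
by rewrite big_ord_recr.
Qed.

Lemma chainE_recr pre m F :
  chainE pre m.+1 F =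
  chainE pre m (fun s => \sum_j q (endpoint s) j * F (rcons s j)).
Proof.
elim: m pre => [//|m IH] pre /=.
by apply: eq_bigr => j _; rewrite -IH.
Qed.

Lemma chainE_take pre m l F :
  chainE pre (m + l) (fun s => F (take (size pre + m) s)) = chainE pre m F.
Proof.
elim: m pre => [|m IH] pre.
  rewrite add0n addn0 /= -(chainE_cst pre l (F pre)).
  by apply: eq_chainE => t _; rewrite take_size_cat.
by rewrite addSn /=; apply: eq_bigr => j _; rewrite -IH size_rcons addSnnS.
Qed.

Fixpoint paths (m : nat) : seq (seq 'I_M) :=
  if m is m'.+1 then [seq j :: t | j <- index_enum 'I_M, t <- paths m'] else [:: [::]].

Lemma mem_paths m s : (s \in paths m) = (size s == m).
Proof.
elim: m s => [|m IH] s; first by rewrite mem_seq1 size_eq0.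
apply/allpairsP/idP; first by move=> [[j t] /= [_ tm ->]]; rewrite /= eqSS -IH.
case: s => [//|j t] /=; rewrite eqSS -IH => tm.
by exists (j, t); split => //; exact: mem_index_enum.
Qed.

Lemma uniq_paths m : uniq (paths m).
Proof.
elim: m => [//|m IH] /=.
apply: allpairs_uniq => //; first exact: index_enum_uniq.
by move=> [j t] [j' t'] _ _ /= [-> ->].
Qed.

Definition path_weight pre t :=
  \prod_(i < size t) q (endpoint (pre ++ take i t)) (nth j0 t i).

Lemma path_weight_cons pre j t :
  path_weight pre (j :: t) = q (endpoint pre) j * path_weight (rcons pre j) t.
Proof.
rewrite /path_weight /= big_ord_recl /= cats0; congr (_ * _).
by apply: eq_bigr => i _; rewrite cat_rcons.
Qed.

Lemma chainE_paths pre m F :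
  chainE pre m F = \sum_(t <- paths m) path_weight pre t * F (pre ++ t).
Proof.
elim: m pre => [|m IH] pre; first by rewrite /= big_seq1 /path_weight big_ord0 mul1r cats0.
rewrite /= big_allpairs_dep /=; apply: eq_bigr => j _.
rewrite IH mulr_sumr; apply: eq_bigr => t _.
by rewrite path_weight_cons cat_rcons mulrA.
Qed.

End IndexChain.

Lemma sum_inv_sqrt_le (R : realType) m :
  \sum_(k < m) (Num.sqrt (k.+1%:R : R))^-1 <= 2 * Num.sqrt m%:R.
Proof.
elim: m => [|m IH]; first by rewrite big_ord0 sqrtr0 mulr0.
rewrite big_ord_recr /=.
set a := Num.sqrt (m%:R : R) in IH *; set b := Num.sqrt (m.+1%:R : R).
have a0 : 0 <= a := sqrtr_ge0 _.
have b0 : 0 < b by rewrite sqrtr_gt0 ltr0n.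
have a2 : a ^+ 2 = m%:R by rewrite sqr_sqrtr // ler0n.
have b2 : b ^+ 2 = m%:R + 1 by rewrite sqr_sqrtr ?ler0n // -natr1.
have bVb : b * b^-1 = 1 by rewrite mulfV // gt_eqF.
have amgm : 2 * a * b <= a ^+ 2 + b ^+ 2 by have := sqr_ge0 (a - b); lra.
(* 1 / sqrt (m + 1) <= 2 (sqrt (m + 1) - sqrt m) *)
suff : 2 * a + b^-1 <= 2 * b by lra.
by rewrite -(ler_pM2l b0) mulrDr bVb; lra.
Qed.

Lemma weighted_telescope (R : realType) (a h gam cc : nat -> R) (A : R) :
  (forall k, 0 <= a k <= A) -> (forall k, 0 <= cc k) -> (forall k, cc k <= cc k.+1) ->
  (forall k, h k <= cc k.+1 * (a k - a k.+1) + gam k.+1) ->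
  forall m, \sum_(k < m) h k <= cc m * (A - a m) + \sum_(k < m) gam k.+1.
Proof.
move=> a_bd cc0 cc_nd h_le; elim => [|m IH].
  by rewrite !big_ord0 addr0; apply: mulr_ge0 => //; have := a_bd 0%N; lra.
rewrite !big_ord_recr /=.
have : cc m * (A - a m) <= cc m.+1 * (A - a m).
  by apply: ler_wpM2r => //; have := a_bd m; lra.
have := h_le m; lra.
Qed.

Lemma sgd_rate (R : realType) (a h gam : nat -> R) (D : R) n :
  0 < D -> (0 < n)%N ->
  (forall k, gam k.+1 = D / (2 * Num.sqrt 2) / Num.sqrt k.+1%:R) ->
  (forall k, 0 <= a k <= D ^+ 2) ->
  (forall k, a k.+1 <= a k - 2 * gam k.+1 * h k + 2 * gam k.+1 ^+ 2) ->
  (n.+1%:R)^-1 * \sum_(k < n.+1) h k <= 4 * Num.sqrt 2 * D / Num.sqrt n%:R.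
Proof.
move=> D0 n0 gamE a_bd a_rec.
set s2 := Num.sqrt (2 : R); set gam1 := D / (2 * s2).
have s20 : 0 < s2 by rewrite sqrtr_gt0.
have s22 : s2 ^+ 2 = 2 by rewrite sqr_sqrtr.
have gam10 : 0 < gam1 by rewrite divr_gt0 // mulr_gt0.
(* Summation by parts against the nondecreasing weights [cc k = 1 / (2 * gam k)]. *)
pose cc k := Num.sqrt (k%:R : R) / (2 * gam1).
have cc0 k : 0 <= cc k by apply: divr_ge0; [exact: sqrtr_ge0 | lra].
have cc_nd k : cc k <= cc k.+1.
  rewrite /cc ler_pM2r; last by rewrite invr_gt0 mulr_gt0.
  by rewrite ler_sqrt ?ler0n // ler_nat.
have h_le k : h k <= cc k.+1 * (a k - a k.+1) + gam k.+1.
  have sk0 : 0 < Num.sqrt (k.+1%:R : R) by rewrite sqrtr_gt0 ltr0n.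
  have e1 : cc k.+1 * (2 * gam k.+1 * h k) = h k.
    by rewrite gamE /cc -/gam1; field; rewrite !gt_eqF.
  have e2 : cc k.+1 * (2 * gam k.+1 ^+ 2) = gam k.+1.
    by rewrite gamE /cc -/gam1; field; rewrite !gt_eqF.
  have step : 2 * gam k.+1 * h k <= a k - a k.+1 + 2 * gam k.+1 ^+ 2.
    by have := a_rec k; lra.
  by have := ler_wpM2l (cc0 k.+1) step; rewrite mulrDr e1 e2.
have tele := weighted_telescope a_bd cc0 cc_nd h_le n.+1.
set r := Num.sqrt (n.+1%:R : R); set t := Num.sqrt (n%:R : R).
have r0 : 0 < r by rewrite sqrtr_gt0 ltr0n.
have t0 : 0 < t by rewrite sqrtr_gt0 ltr0n.
have r2 : r ^+ 2 = n.+1%:R by rewrite sqr_sqrtr // ler0n.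
have tr : t <= r by rewrite ler_sqrt ?ler0n // ler_nat.
have sum_gam : \sum_(k < n.+1) gam k.+1 <= gam1 * (2 * r).
  under eq_bigr do rewrite gamE -/gam1.
  by rewrite -mulr_sumr ler_wpM2l ?sum_inv_sqrt_le //; exact: ltW.
have ccD : cc n.+1 * D ^+ 2 = s2 * D * r by rewrite /cc -/r /gam1; field; rewrite !gt_eqF.
have DE : D = gam1 * (2 * s2) by rewrite /gam1 divfK // gt_eqF // mulr_gt0.
have sDr : s2 * D * r = 4 * gam1 * r.
  rewrite DE (_ : s2 * (gam1 * (2 * s2)) * r = 2 * s2 ^+ 2 * gam1 * r); last by ring.
  by rewrite s22; ring.
have cc_le : cc n.+1 * (D ^+ 2 - a n.+1) <= cc n.+1 * D ^+ 2.
  by apply: ler_wpM2l => //; have := a_bd n.+1; lra.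
have gr0 : 0 <= gam1 * r by rewrite mulr_ge0 // ltW.
have sum_h : \sum_(k < n.+1) h k <= 2 * (s2 * D * r) by lra.
have sD0 : 0 < s2 * D by rewrite mulr_gt0.
apply: le_trans (ler_wpM2l _ sum_h) _; first by rewrite invr_ge0 ler0n.
rewrite -r2 (_ : (r ^+ 2)^-1 * (2 * (s2 * D * r)) = 2 * (s2 * D) / r); last first.
  by field; rewrite gt_eqF.
apply: (@le_trans _ _ (2 * (s2 * D) / t)).
  by rewrite ler_wpM2l ?lef_pV2 ?posrE // mulr_ge0 // ltW.
by rewrite ler_pM2r ?invr_gt0 //; lra.
Qed.

Definition psgd_step (R : realType) (M : nat) (w : 'I_M -> R)
    (proj : ('I_M -> R) -> ('I_M -> R)) (gam : nat -> R)
    (k : nat) (g : 'I_M -> R) (j : 'I_M) : 'I_M -> R :=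
  proj (fun i => g i - gam k * ((j == i)%:R - w i)).

Section ProjectedSGD.
Variables (R : realType) (M : nat).
Variables (w : 'I_M -> R) (proj : ('I_M -> R) -> ('I_M -> R)) (gam : nat -> R).
Variables (g0 : 'I_M -> R) (j0 : 'I_M) (q : ('I_M -> R) -> 'I_M -> R).
Variables (H : ('I_M -> R) -> R) (gstar : 'I_M -> R) (C : set ('I_M -> R)) (D : R).
Hypothesis q_ge0 : forall g j, 0 <= q g j.
Hypothesis sum_q : forall g, \sum_j q g j = 1.
Hypothesis H_subgrad : forall g g', H g + \sum_j (q g j - w j) * (g' j - g j) <= H g'.
Hypothesis proj_in : forall z, C (proj z).
Hypothesis proj_nonexpansive : forall z u, C u ->
  \sum_j (proj z j - u j) ^+ 2 <= \sum_j (z j - u j) ^+ 2.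
Hypothesis g0_in : C g0.
Hypothesis gstar_in : C gstar.
Hypothesis sqdist_le : forall u v, C u -> C v -> \sum_j (u j - v j) ^+ 2 <= D ^+ 2.
Hypothesis w_ge0 : forall j, 0 <= w j.
Hypothesis sum_w : \sum_j w j = 1.
Hypothesis gam_ge0 : forall k, 0 <= gam k.+1.

Local Notation step := (psgd_step w proj gam).
Local Notation iter := (iterate g0 step j0).
Local Notation endpt := (endpoint g0 step j0).
Local Notation cE := (chainE g0 step j0 q).

Definition sqdist s := \sum_i (endpt s i - gstar i) ^+ 2.
Definition gap s := H (endpt s) - H gstar.
Definition avg_iterate n s i := (n.+1%:R)^-1 * \sum_(k < n.+1) iter s k i.

Lemma iterate_in s k : C (iter s k).
Proof. by case: k => [|k] /=; last exact: proj_in. Qed.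

Lemma subgrad_sqnorm_le2 (j : 'I_M) : \sum_i ((j == i)%:R - w i) ^+ 2 <= 2.
Proof.
have w_le1 i : w i <= 1.
  by rewrite -sum_w (bigD1 i) //= lerDl; apply: sumr_ge0 => k _; exact: w_ge0.
apply: (@le_trans _ _ (\sum_i ((j == i)%:R * 1 + w i))).
  apply: ler_sum => i _; have := w_ge0 i; have := w_le1 i.
  by case: (j == i) => /=; nra.
by rewrite big_split /= sum_eq_natr_mul sum_w.
Qed.

Lemma sqdist_step s :
  \sum_j q (endpt s) j * sqdist (rcons s j) <=
  sqdist s - 2 * gam (size s).+1 * gap s + 2 * gam (size s).+1 ^+ 2.
Proof.
set g := endpt s; set gm := gam (size s).+1.
pose dl i := g i - gstar i; pose wdl := \sum_i w i * dl i.
have gm0 : 0 <= gm := gam_ge0 _.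
have one_sample j : sqdist (rcons s j) <= sqdist s - 2 * gm * (dl j - wdl) + 2 * gm ^+ 2.
  rewrite /sqdist endpoint_rcons -/g -/gm.
  apply: le_trans (proj_nonexpansive _ gstar_in) _.
  rewrite (eq_bigr (fun i => dl i ^+ 2 + (- 2 * gm) * (((j == i)%:R - w i) * dl i)
      + gm ^+ 2 * ((j == i)%:R - w i) ^+ 2)) => [|i _]; last by rewrite /dl /gm; ring.
  rewrite !big_split /= -!mulr_sumr.
  have -> : \sum_i ((j == i)%:R - w i) * dl i = dl j - wdl.
    rewrite (eq_bigr (fun i => (j == i)%:R * dl i - w i * dl i)) => [|i _]; last by ring.
    by rewrite sumrB sum_eq_natr_mul.
  have : gm ^+ 2 * \sum_i ((j == i)%:R - w i) ^+ 2 <= gm ^+ 2 * 2.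
    by rewrite ler_wpM2l ?sqr_ge0 ?subgrad_sqnorm_le2.
  rewrite /sqdist -/g; lra.
apply: (@le_trans _ _ (\sum_j q g j * (sqdist s - 2 * gm * (dl j - wdl) + 2 * gm ^+ 2))).
  by apply: ler_sum => j _; rewrite ler_wpM2l.
rewrite (eq_bigr (fun j => q g j * (sqdist s + 2 * gm * wdl + 2 * gm ^+ 2)
    - (2 * gm) * (q g j * dl j))) => [|j _]; last by ring.
rewrite sumrB -mulr_suml sum_q mul1r -mulr_sumr.
have := H_subgrad g gstar.
have -> : \sum_j (q g j - w j) * (gstar j - g j) = wdl - \sum_j q g j * dl j.
  by rewrite /wdl -sumrB; apply: eq_bigr => j _; rewrite /dl; ring.
move=> Hg; have : 2 * gm * gap s <= 2 * gm * (\sum_j q g j * dl j - wdl).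
  by rewrite ler_wpM2l /gap -/g; lra.
lra.
Qed.

Lemma mean_sqdist_rec k :
  cE [::] k.+1 sqdist <=
  cE [::] k sqdist - 2 * gam k.+1 * cE [::] k gap + 2 * gam k.+1 ^+ 2.
Proof.
rewrite chainE_recr.
apply: (@le_trans _ _ (cE [::] k (fun s =>
    sqdist s + ((- 2 * gam k.+1) * gap s + 2 * gam k.+1 ^+ 2)))).
  by apply: chainE_le => // t tk; have := sqdist_step t; rewrite tk; lra.
by rewrite 2?chainED // chainE_cst // chainEZ; lra.
Qed.

Lemma mean_sqdist_bounds k : 0 <= cE [::] k sqdist <= D ^+ 2.
Proof.
apply/andP; split.
  rewrite -(chainE_cst g0 step j0 sum_q [::] k 0).
  by apply: chainE_le => // t _; apply: sumr_ge0 => i _; exact: sqr_ge0.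
rewrite -(chainE_cst g0 step j0 sum_q [::] k (D ^+ 2)).
by apply: chainE_le => // t _; apply: sqdist_le => //; exact: iterate_in.
Qed.

Lemma gap_avg_le n s : size s = n ->
  H (avg_iterate n s) - H gstar <= (n.+1%:R)^-1 * \sum_(k < n.+1) gap (take k s).
Proof.
move=> sn; set gb := avg_iterate n s.
have n1 : n.+1%:R != 0 :> R by rewrite pnatr_eq0.
have sum_iter i : \sum_(k < n.+1) iter s k i = gb i *+ n.+1.
  by rewrite /gb /avg_iterate -mulr_natr mulrC mulrA mulfV ?mul1r.
have sum_lin : \sum_(k < n.+1) \sum_i (q gb i - w i) * (iter s k i - gb i) = 0.
  rewrite exchange_big /=; apply: big1 => i _.
  by rewrite -mulr_sumr sumrB sum_iter sumr_const card_ord subrr mulr0.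
have sum_H : \sum_(k < n.+1) (H gb + \sum_i (q gb i - w i) * (iter s k i - gb i))
    <= \sum_(k < n.+1) H (iter s k) by apply: ler_sum => k _; exact: H_subgrad.
rewrite big_split /= sum_lin addr0 sumr_const card_ord -mulr_natl in sum_H.
have -> : \sum_(k < n.+1) gap (take k s) =
    \sum_(k < n.+1) H (iter s k) - H gstar *+ n.+1.
  rewrite /gap sumrB sumr_const card_ord; congr (_ - _).
  by apply: eq_bigr => k _; rewrite iterate_take // sn -ltnS.
rewrite -[H gstar *+ _]mulr_natl mulrBr mulrA mulVf // mul1r lerD2r.
by rewrite ler_pdivlMl ?ltr0n.
Qed.

Lemma mean_gap_avg_le n :
  cE [::] n (fun s => H (avg_iterate n s) - H gstar) <=
  (n.+1%:R)^-1 * \sum_(k < n.+1) cE [::] k gap.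
Proof.
apply: (@le_trans _ _ (cE [::] n (fun s =>
    (n.+1%:R)^-1 * \sum_(k < n.+1) gap (take k s)))).
  by apply: chainE_le => // t tn; exact: gap_avg_le.
rewrite chainEZ (chainE_sum g0 step j0 sum_q [::] n n.+1 (fun k s => gap (take k s))).
apply: ler_wpM2l; first by rewrite invr_ge0 ler0n.
apply: ler_sum => k _; have kn : (k <= n)%N by rewrite -ltnS.
by rewrite -(chainE_take g0 step j0 sum_q [::] k (n - k) gap) /= subnKC.
Qed.

Lemma mean_gap_avg_Diam0 n : D = 0 ->
  cE [::] n (fun s => H (avg_iterate n s) - H gstar) = 0.
Proof.
move=> D0; rewrite -[RHS](chainE_cst g0 step j0 sum_q [::] n 0).
apply: eq_chainE => t _; apply/eqP; rewrite subr_eq0; apply/eqP; congr H.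
apply/funext => i; rewrite /avg_iterate (eq_bigr (fun _ => gstar i)) => [|k _].
  by rewrite sumr_const card_ord -[gstar i *+ _]mulr_natl mulrA mulVf ?mul1r // pnatr_eq0.
have := sqdist_le (iterate_in ([::] ++ t) k) gstar_in; rewrite D0 expr0n /= => le0.
have /eqP : \sum_j (iter ([::] ++ t) k j - gstar j) ^+ 2 = 0.
  by apply/eqP; rewrite eq_le le0 sumr_ge0 // => j _; exact: sqr_ge0.
rewrite psumr_eq0 => [/allP/(_ i (mem_index_enum _))|j _]; last exact: sqr_ge0.
by rewrite sqrf_eq0 subr_eq0 => /eqP.
Qed.

Lemma psgd_mean_gap_le n : (0 < n)%N -> 0 <= D ->
  (forall k, gam k.+1 = D / (2 * Num.sqrt 2) / Num.sqrt k.+1%:R) ->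
  cE [::] n (fun s => H (avg_iterate n s) - H gstar) <=
  4 * Num.sqrt 2 * D / Num.sqrt n%:R.
Proof.
move=> n0 D_ge0 gamE; have [D_eq0|D_neq0] := eqVneq D 0.
  (* The steps vanish, so the recursion is void, but [C] is a single point. *)
  by rewrite mean_gap_avg_Diam0 // D_eq0 mulr0 mul0r.
apply: le_trans (mean_gap_avg_le n) _.
apply: (sgd_rate _ n0 gamE mean_sqdist_bounds mean_sqdist_rec).
by rewrite lt0r D_neq0.
Qed.

End ProjectedSGD.

Section SampleIndexPaths.
Variables (R : realType) (d M : nat).
Local Notation T := (d.-tuple R).
Variables (c : T -> T -> R) (y : 'I_M -> T) (w : 'I_M -> R).
Variables (proj : ('I_M -> R) -> ('I_M -> R)) (gamma1 b : R) (g0 : 'I_M -> R).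
Variables (dO : measure_display) (O : measurableType dO).
Variables (X : nat -> O -> T) (j0 : 'I_M) (n : nat).
Local Notation psg := (psgd c y w proj gamma1 b g0 X).
Local Notation iter := (iterate g0 (psgd_step w proj (gammak gamma1 b)) j0).

Definition sample_index om i := cell_index c y j0 (psg i.-1 om) (X i om).
Definition index_path om := mkseq (fun i => sample_index om i.+1) n.

Lemma psgd_iterate om k : (k <= n)%N -> psg k om = iter (index_path om) k.
Proof.
elim: k => [//|k IH] kn; rewrite /= nth_mkseq // -IH ?(ltnW kn) //.
congr proj; apply/funext => j.
by rewrite /subgrad (lag_cell_index c y j0) (inj_eq (@Some_inj _)); case: (_ == _).
Qed.

Definition path_event s :=
  \bigcap_(i in [set i | i \in iota 0 n])
    (X i.+1 @^-1` cell c y (iter s i) (nth j0 s i)).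

Lemma path_eventP s om : size s = n -> path_event s om <-> index_path om = s.
Proof.
move=> sn; split => [ev|<- i ilt]; last first.
  have {}ilt : (i < n)%N by move: ilt; rewrite /= mem_iota.
  by rewrite -(psgd_iterate om (ltnW ilt)) nth_mkseq //; exact: lag_cell_index.
apply: (@eq_from_nth _ j0); first by rewrite size_mkseq sn.
rewrite size_mkseq => i; elim/ltn_ind: i => i IH ilt.
have : cell c y (iter s i) (nth j0 s i) (X i.+1 om).
  by apply: ev; rewrite /= mem_iota.
have -> : iter s i = psg i om.
  rewrite (psgd_iterate om (ltnW ilt)); apply: eq_iterate => k ki.
  exact/esym/(IH k ki (ltn_trans ki ilt)).
move=> in_cell; have : lag c y (psg i om) (X i.+1 om) = Some (nth j0 s i) := in_cell.
by rewrite nth_mkseq // (lag_cell_index c y j0) => -[].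
Qed.

Variables (mu : probability T R) (P : probability O R).
Hypothesis hcm : forall j, measurable_fun setT (fun x => c x (y j)).
Hypothesis hX : iid_law P (fun k => X k.+1) mu.

Lemma measurable_path_event s : measurable (path_event s).
Proof.
apply: bigcap_measurableType => i _; case: hX => mX _ _.
by rewrite -[_ @^-1` _]setTI; apply: mX => //; exact: measurable_cell.
Qed.

Lemma prob_path_event s : P (path_event s) =
  (\prod_(i <- iota 0 n) cell_mass mu c y (iter s i) (nth j0 s i))%:E.
Proof.
case: hX => _ law indep.
rewrite /path_event (indep _ (fun i => cell c y (iter s i) (nth j0 s i))) ?iota_uniq //;
  last by move=> i; exact: measurable_cell.
rewrite -prodEFin; apply: eq_bigr => i _.
by rewrite law ?cell_massE //; exact: measurable_cell.
Qed.

Lemma integral_index_path (V : seq 'I_M -> R) :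
  (\int[P]_om (V (index_path om))%:E =
   (\sum_(s <- paths M n) V s *
      \prod_(i <- iota 0 n) cell_mass mu c y (iter s i) (nth j0 s i))%:E)%E.
Proof.
transitivity (\int[P]_om (\sum_(s <- paths M n) (V s)%:E * (\1_(path_event s) om)%:E))%E.
  apply: eq_integral => om _.
  have path_in : index_path om \in paths M n by rewrite mem_paths size_mkseq.
  rewrite (bigD1_seq _ path_in (uniq_paths M n)) /= indicE mem_set; last first.
    by apply/path_eventP => //; rewrite size_mkseq.
  rewrite mule1 big_seq_cond big1 ?adde0 // => s /andP[s_in s_neq].
  rewrite indicE memNset ?mule0 // => /path_eventP.
  by rewrite mem_paths in s_in => /(_ (eqP s_in)) s_eq; rewrite s_eq eqxx in s_neq.
have int_ev s : P.-integrable setT (fun om => (\1_(path_event s) om)%:E).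
  by apply: integrable_indic; exact: measurable_path_event.
rewrite integral_sum // => [|s]; last exact: integrableZl.
rewrite -sumEFin; apply: eq_bigr => s _.
rewrite integralZl ?integral_indic ?setIT //; last exact: measurable_path_event.
by rewrite [X in (_ * X)%E]prob_path_event -EFinM.
Qed.

Hypothesis hHfin : forall g, mu.-integrable setT (fun x => (hfun c y w g x)%:E).

Lemma expected_psgd_gap gstar :
  (\int[P]_om (Hsd c y w mu (gbar c y w proj gamma1 b g0 X n om) - Hsd c y w mu gstar) =
   (chainE g0 (psgd_step w proj (gammak gamma1 b)) j0 (cell_mass mu c y) [::] n
      (fun s => Hsdr mu c y w (avg_iterate w proj (gammak gamma1 b) g0 j0 n s)
                - Hsdr mu c y w gstar))%:E)%E.
Proof.
set V := fun s => _ - _.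
transitivity (\int[P]_om (V (index_path om))%:E)%E.
  apply: eq_integral => om _; rewrite !(HsdE hHfin) -EFinD /V.
  congr (Hsdr _ _ _ _ _ - _)%:E; apply/funext => i.
  rewrite /gbar /avg_iterate; congr (_ * _); apply: eq_bigr => k _.
  by rewrite psgd_iterate // -ltnS.
rewrite integral_index_path chainE_paths; congr EFin.
apply: eq_big_seq => s; rewrite mem_paths => /eqP sn.
rewrite cat0s mulrC /path_weight sn; congr (_ * _).
have -> : iota 0 n = index_iota 0 n by rewrite /index_iota subn0.
rewrite big_mkord; apply: eq_bigr => i _.
by rewrite iterate_take // sn ltnW.
Qed.

End SampleIndexPaths.

Lemma gammak_half (R : realType) (g1 : R) k :
  gammak g1 2^-1 k.+1 = g1 / Num.sqrt k.+1%:R.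
Proof. by rewrite /gammak powRN powR12_sqrt // ler0n. Qed.

Theorem theorem3p2 (R : realType) (d M : nat)
  (mu : probability (d.-tuple R) R)
  (w : 'I_M -> R) (y : 'I_M -> d.-tuple R)
  (c : d.-tuple R -> d.-tuple R -> R)
  (hw : forall j, 0 < w j) (hw1 : \sum_j w j = 1)
  (hc0 : forall x x', 0 <= c x x')
  (hcm : forall j, measurable_fun setT (fun x => c x (y j)))
  (hHfin : forall g, mu.-integrable setT (fun x => (hfun c y w g x)%:E))
  (gstar : 'I_M -> R)
  (hmin : forall g, (Hsd c y w mu gstar <= Hsd c y w mu g)%E)
  (K : set (d.-tuple R))
  (hKc : compact (@tup2rv R d @` K)) (hKm : measurable K)
  (hKb : exists B : R, forall x j, K x -> `|c x (y j)| <= B)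
  (hmuK : ((1 - wmin w / 2)%:E <= mu K)%E)
  (hgs : Cset c y K gstar)
  (proj : ('I_M -> R) -> ('I_M -> R))
  (hproj : is_eucl_proj (Cset c y K) proj)
  (dO : measure_display) (O : measurableType dO) (P : probability O R)
  (X : nat -> O -> d.-tuple R) (hX : iid_law P (fun k => X k.+1) mu)
  (g0 : 'I_M -> R) (hg0 : Cset c y K g0)
  (n : nat) (hn : (1 <= n)%N) :
  let gamma1 := Diam (Cset c y K) / (2 * Num.sqrt 2) in
  let b := 2^-1 in
  (\int[P]_om (Hsd c y w mu (gbar c y w proj gamma1 b g0 X n om)
                 - Hsd c y w mu gstar)
     <= ((4 * Num.sqrt 2 * Diam (Cset c y K)) / Num.sqrt n%:R)%:E)%E.
Proof.
cbv zeta; set D := Diam (Cset c y K).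
have M_gt0 : (0 < M)%N.
  rewrite lt0n; apply/eqP => M0; move: hw1; rewrite big1 => [/eqP|j _].
    by rewrite eq_sym oner_eq0.
  by have := ltn_ord j; rewrite [X in (_ < X)%N]M0.
pose j0 := Ordinal M_gt0.
have D_ge0 : 0 <= D := box_Diam_ge0 hg0.
have gamE k : gammak (D / (2 * Num.sqrt 2)) 2^-1 k.+1 =
    D / (2 * Num.sqrt 2) / Num.sqrt k.+1%:R by exact: gammak_half.
rewrite (expected_psgd_gap _ _ _ _ j0 _ hcm hX hHfin) lee_fin.
apply: (psgd_mean_gap_le (C := Cset c y K) j0) => //.
- exact: cell_mass_ge0.
- exact: (sum_cell_mass mu j0 hcm).
- exact: (Hsdr_subgrad j0 hcm hHfin).
- exact: box_proj_in.
- exact: box_proj_nonexpansive.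
- exact: box_sqdist_le_Diam.
- by move=> j; exact: ltW.
- move=> k; rewrite gamE; apply: divr_ge0 => //.
  by apply: divr_ge0 => //; rewrite mulr_ge0 ?sqrtr_ge0.
Qed.
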